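(* Assume there is $\alpha_l\in\mathcal{K}_\infty$ with $\alpha_l(|x|)\le\inf_{u\in\mathbb{R}^m}l(x,u)$ for all $x\in\mathbb{R}^n$. Assume all finite-horizon infima below are attained, and that there exist $\underline N\in\mathbb{N}$ and $\alpha\in(0,1]$ such that for every horizon $M\ge\underline N$, every $x\in\mathbb{R}^n$ and every optimal sequence $u^\ast(\cdot;x)$ for $V_M(x)$, $$V_M\big(f(x,u^\ast(0;x))\big)+\alpha\, l(x,u^\ast(0;x))\le V_M(x).$$ Let $N\ge\underline N$, let $\hat V^0\equiv 0$ and let $\hat V^{i}$ be generated by the recursion $\hat V^{i+1}(x)=\inf_{u(\cdot;x)}\sum_{k=0}^{N-1}l(x_u(k;x),u(k;x))+\hat V^i(x_u(N;x))$. Take terminal costs $F^i=\hat V^i$. Then for every $i\in\mathbb{N}_0$ and every $x\in\mathbb{R}^n$, $$\mathcal{V}_N\big(f(x,\kappa_N(x,i)),i\big)\le \mathcal{V}_N(x,i)-\alpha\,\alpha_l(|x|).$$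
   Context: Dynamics $x^+=f(x,u)$, $f$ continuous, $f(0,0)=0$; $x_u(k;x)$ is the state trajectory from $x$ under the input sequence $u(\cdot;x)$. Stage cost $l\ge0$ positive definite. $V_M(x)=\inf_{u(\cdot;x)\in\mathbb{R}^{m\times M}}\sum_{k=0}^{M-1}l(x_u(k;x),u(k;x))$ is the optimal $M$-horizon cost without terminal cost. For a sequence of positive definite terminal costs $F^i:\mathbb{R}^n\to\mathbb{R}_{\ge0}$, $\mathcal{V}_N(x,i)=\inf_{u(\cdot;x)\in\mathbb{R}^{m\times N}}\sum_{k=0}^{N-1}l(x_u(k;x),u(k;x))+F^i(x_u(N;x))$, and $\kappa_N(x,i)=u^\ast(0;x,i)$ is the first element of an optimizing sequence of this problem. $\mathcal{K}_\infty$: continuous, zero at zero, strictly increasing, unbounded functions $\mathbb{R}_{\ge0}\to\mathbb{R}_{\ge0}$. *)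

From HB Require Import structures.
From mathcomp Require Import all_boot all_order all_algebra.
From mathcomp Require Import all_classical all_reals all_analysis.
Set Implicit Arguments. Unset Strict Implicit. Unset Printing Implicit Defensive.
Import Order.TTheory GRing.Theory Num.Theory.
Import numFieldNormedType.Exports.
Local Open Scope classical_set_scope.
Local Open Scope ring_scope.

Section Defs.
Variables (R : realType) (n m : nat).
Notation X := 'rV[R]_n.
Notation U := 'rV[R]_m.

Definition enorm (x : X) : R := Num.sqrt (\sum_(i < n) (x ord0 i) ^+ 2).

(* class K_infinity (functions on R>=0, represented as R -> R) *)
Definition Kinf (a : R -> R) : Prop :=
  [/\ {within [set r : R | 0 <= r], continuous a},
      a 0 = 0,
      (forall r s : R, 0 <= r -> r < s -> a r < a s) &
      (forall M : R, exists r : R, 0 <= r /\ M < a r)].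

Fixpoint traj (f : X -> U -> X) (x : X) (u : nat -> U) (k : nat) : X :=
  match k with
  | 0 => x
  | k'.+1 => f (traj f x u k') (u k')
  end.

Definition cost (f : X -> U -> X) (l : X -> U -> R) (F : X -> R) (M : nat)
  (x : X) (u : nat -> U) : R :=
  \sum_(k < M) l (traj f x u k) (u k) + F (traj f x u M).

Definition Vopt f l F M (x : X) : R := inf (range (cost f l F M x)).

Definition VM f l M (x : X) : R := Vopt f l (fun _ => 0) M x.

Fixpoint Vhat f l (N : nat) (i : nat) : X -> R :=
  match i with
  | 0 => fun _ => 0
  | i'.+1 => fun x => Vopt f l (Vhat f l N i') N x
  end.

Definition calV f l N (x : X) (i : nat) : R := Vopt f l (Vhat f l N i) N x.

End Defs.

From HB Require Import structures.
From mathcomp Require Import all_boot all_order all_algebra.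
From mathcomp Require Import all_classical all_reals all_analysis.
Import Order.TTheory GRing.Theory Num.Theory.
Import numFieldNormedType.Exports.
Local Open Scope classical_set_scope.
Local Open Scope ring_scope.
Set Implicit Arguments. Unset Strict Implicit. Unset Printing Implicit Defensive.

(* The whole argument rests on the dynamic programming principle: when the
   finite-horizon infima are attained, solving an M-step problem with terminal
   cost V_K is the same as solving the (M+K)-step problem without terminal
   cost, i.e. Vopt (V_K) M = V_(M+K).  By induction this identifies the
   iterated terminal costs, Vhat^i = V_(iN), hence calV_N(., i) = V_(N+iN).
   Moreover, concatenating an optimal sequence u of the problem with terminal
   cost V_K and an optimal sequence w of V_K from the state reached by u gives
   an optimal sequence of V_(M+K) whose first input is that of u.  The assumed
   decrease of V_(N+iN) along optimal first inputs then yields the claim,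
   since alpha_l(|x|) bounds every stage cost l(x, .) from below. *)

Section Trajectories.
Variables (R : realType) (n m : nat).
Variable f : 'rV[R]_n -> 'rV[R]_m -> 'rV[R]_n.

Lemma traj_ext x (u u' : nat -> 'rV[R]_m) k :
  (forall j, (j < k)%N -> u j = u' j) -> traj f x u k = traj f x u' k.
Proof.
elim: k => [|k IH] equ //=.
by rewrite IH ?equ // => j /ltnW; apply: equ.
Qed.

Lemma traj_shift x (v : nat -> 'rV[R]_m) M k :
  traj f x v (M + k) = traj f (traj f x v M) (fun j => v (M + j)%N) k.
Proof. by elim: k => [|k IH]; rewrite ?addn0 // addnS /= IH. Qed.

End Trajectories.

Lemma inf_range_le {T : Type} {R : realType} (g : T -> R) t :
  (forall s, 0 <= g s) -> inf (range g) <= g t.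
Proof. by move=> g_ge0; apply: ge_inf; [exists 0 => _ [s _ <-] | exists t]. Qed.

Definition concat {U : Type} (M : nat) (u w : nat -> U) : nat -> U :=
  fun k => if (k < M)%N then u k else w (k - M)%N.

Section Costs.
Variables (R : realType) (n m : nat).
Variables (f : 'rV[R]_n -> 'rV[R]_m -> 'rV[R]_n) (l : 'rV[R]_n -> 'rV[R]_m -> R).

Lemma cost_split F K M x (v : nat -> 'rV[R]_m) :
  cost f l F (M + K) x v =
  \sum_(k < M) l (traj f x v k) (v k)
    + cost f l F K (traj f x v M) (fun j => v (M + j)%N).
Proof.
rewrite /cost big_split_ord /= addrA; congr (_ + _ + _); last by rewrite traj_shift.
by apply: eq_bigr => k _; rewrite traj_shift.
Qed.

Lemma cost_concat F K M x (u w : nat -> 'rV[R]_m) :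
  cost f l F (M + K) x (concat M u w) =
  \sum_(k < M) l (traj f x u k) (u k) + cost f l F K (traj f x u M) w.
Proof.
have traj_head k : (k <= M)%N -> traj f x (concat M u w) k = traj f x u k.
  by move=> kM; apply: traj_ext => j jk; rewrite /concat (leq_trans jk kM).
have tail : (fun j => concat M u w (M + j)%N) = w.
  by apply: boolp.funext => j; rewrite /concat ltnNge leq_addr /= addKn.
rewrite cost_split tail traj_head //; congr (_ + _).
by apply: eq_bigr => k _; rewrite traj_head 1?ltnW // /concat ltn_ord.
Qed.

Hypothesis l_ge0 : forall x u, 0 <= l x u.

Lemma cost_ge0 F K y u : (forall z, 0 <= F z) -> 0 <= cost f l F K y u.
Proof. by move=> F_ge0; apply: addr_ge0 => //; apply: sumr_ge0. Qed.

Lemma Vopt_le_cost F K y u : (forall z, 0 <= F z) -> Vopt f l F K y <= cost f l F K y u.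
Proof.
by move=> F_ge0; apply: inf_range_le => v; apply: cost_ge0.
Qed.

Lemma VM_ge0 K y : 0 <= VM f l K y.
Proof.
apply: lb_le_inf; first by exists (cost f l (fun _ => 0) K y (fun _ => 0)); exists (fun _ => 0).
by move=> _ [u _ <-]; apply: cost_ge0.
Qed.

Lemma VM0 y : VM f l 0 y = 0.
Proof.
rewrite /VM /Vopt.
suff -> : range (cost f l (fun _ => 0) 0 y) = [set 0] by rewrite inf1.
apply/seteqP; split => z; first by move=> [u _ <-]; rewrite /cost big_ord0 addr0.
by move=> ->; exists (fun _ => 0) => //; rewrite /cost big_ord0 addr0.
Qed.

Hypothesis attain : forall M x, exists u, cost f l (fun _ => 0) M x u = VM f l M x.

Lemma DP K M y : Vopt f l (VM f l K) M y = VM f l (M + K) y.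
Proof.
apply/le_anti/andP; split.
- have [v opt_v] := attain (M + K) y.
  apply: (le_trans (Vopt_le_cost M y v (VM_ge0 K))).
  rewrite -opt_v cost_split {1}/cost lerD2l.
  exact: Vopt_le_cost.
- apply: lb_le_inf; first by exists (cost f l (VM f l K) M y (fun _ => 0)); exists (fun _ => 0).
  move=> _ [u _ <-].
  have [w opt_w] := attain K (traj f y u M).
  rewrite /cost -opt_w -cost_concat.
  exact: Vopt_le_cost.
Qed.

Lemma Vhat_VM N i : Vhat f l N i = VM f l (i * N).
Proof.
apply: boolp.funext => x; elim: i x => [|i IH] x /=; first by rewrite mul0n VM0.
by rewrite (boolp.funext IH) DP mulSn.
Qed.

Lemma calV_VM N i x : calV f l N x i = VM f l (N + i * N) x.
Proof. by rewrite /calV Vhat_VM DP. Qed.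

Lemma concat_optimal K M x (u w : nat -> 'rV[R]_m) :
  cost f l (VM f l K) M x u = Vopt f l (VM f l K) M x ->
  cost f l (fun _ => 0) K (traj f x u M) w = VM f l K (traj f x u M) ->
  cost f l (fun _ => 0) (M + K) x (concat M u w) = VM f l (M + K) x.
Proof. by move=> opt_u opt_w; rewrite cost_concat opt_w -DP -opt_u. Qed.

Lemma VM0_optimal x (u : nat -> 'rV[R]_m) : cost f l (fun _ => 0) 0 x u = VM f l 0 x.
Proof. by rewrite VM0 /cost big_ord0 addr0. Qed.

End Costs.

Theorem proposition3 (R : realType) (n m : nat)
  (f : 'rV[R]_n -> 'rV[R]_m -> 'rV[R]_n) (l : 'rV[R]_n -> 'rV[R]_m -> R)
  (alpha_l : R -> R) (Nlow : nat) (alpha : R) (N : nat) :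
  continuous (fun p : 'rV[R]_n * 'rV[R]_m => f p.1 p.2) ->
  f 0 0 = 0 ->
  (forall x u, 0 <= l x u) ->
  l 0 0 = 0 ->
  (forall x u, (x, u) != (0, 0) -> 0 < l x u) ->
  Kinf alpha_l ->
  (forall x, alpha_l (enorm x) <= inf (range (l x))) ->
  (* all finite-horizon infima are attained *)
  (forall M x, exists u, cost f l (fun _ => 0) M x u = VM f l M x) ->
  (forall i x, exists u, cost f l (Vhat f l N i) N x u = calV f l N x i) ->
  0 < alpha -> alpha <= 1 ->
  (forall M x (ustar : nat -> 'rV[R]_m), (Nlow <= M)%N ->
     cost f l (fun _ => 0) M x ustar = VM f l M x ->
     VM f l M (f x (ustar 0%N)) + alpha * l x (ustar 0%N) <= VM f l M x) ->
  (Nlow <= N)%N ->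
  forall (i : nat) (x : 'rV[R]_n) (ustar : nat -> 'rV[R]_m),
    cost f l (Vhat f l N i) N x ustar = calV f l N x i ->
    calV f l N (f x (ustar 0%N)) i <= calV f l N x i - alpha * alpha_l (enorm x).
Proof.
move=> _ _ l_ge0 _ _ _ alpha_l_le attain _ alpha_gt0 _ decrease Nlow_le i x us opt_us.
pose horizon := (N + i * N)%N.
have [v [opt_v v0]] : exists v,
    cost f l (fun _ => 0) horizon x v = VM f l horizon x /\ v 0%N = us 0%N.
  case: N {Nlow_le opt_us} (opt_us) @horizon => [|N] opt_us horizon.
    by exists us; rewrite /horizon muln0; split => //; apply: VM0_optimal.
  have [w opt_w] := attain (i * N.+1)%N (traj f x us N.+1).
  exists (concat N.+1 us w); split => //.
  by apply: (concat_optimal l_ge0 attain) => //; rewrite -Vhat_VM.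
have stage_lb : alpha * alpha_l (enorm x) <= alpha * l x (us 0%N).
  apply: ler_wpM2l; first exact: ltW.
  by apply: le_trans (alpha_l_le x) _; apply: inf_range_le.
rewrite !calV_VM // lerBrDr -v0; apply: le_trans (decrease _ _ _ _ opt_v).
- by rewrite lerD2l v0.
- exact: leq_trans Nlow_le (leq_addr _ _).
Qed.
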